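(* Let $d\ge 2$, $p\in[0,1]$, and let $I$ be the infinite open dual cluster ($I=\emptyset$ if there is none). Then $P_p$-almost surely there is a bijection between the connected components of the hole graph $G(\omega)$ and the connected components of the graph $(\mathbb{L}^d)^*-I$, in which a hole cluster corresponds to the component of $(\mathbb{L}^d)^*-I$ containing the dual vertices lying in its holes; moreover a hole cluster is infinite if and only if the corresponding connected component of $(\mathbb{L}^d)^*-I$ is infinite.
   Context: A face is a $(d-1)$-dimensional elementary cube in $\mathbb{R}^d$ (a product of intervals $[l,l]$ or $[l,l+1]$, $l\in\mathbb{Z}$, with exactly one degenerate factor). Face percolation with parameter $p$: each face open independently with probability $p$ (measure $P_p$); $K(\omega)$ is the union of open faces. Holes are the bounded connected components of $\mathbb{R}^d\setminus K(\omega)$; the hole graph $G(\omega)$ has the holes as vertices (it is the limit $\bigcup_n G^n$ of the corresponding graphs for $K(\omega)\cap[-n,n]^d$), two holes adjacent iff some face lies in both boundaries. Dual lattice $(\mathbb{L}^d)^*$: vertices $(\mathbb{Z}^d)^*=\mathbb{Z}^d+(1/2,\dots,1/2)$, bonds between dual vertices at $\ell^1$-distance $1$. Each dual bond $e^*$ crosses a unique face $Q_{e^*}$, and $e^*$ is open iff $Q_{e^*}$ is closed (this is bond percolation with parameter $1-p$, in which almost surely there is at most one infinite open cluster). $(\mathbb{L}^d)^*-I$ is the subgraph of the full dual lattice (regardless of whether bonds are open) with vertex set $(\mathbb{Z}^d)^*\setminus I$ and all dual bonds having both endpoints outside $I$. A hole cluster is infinite if it has infinitely many holes. *)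

From HB Require Import structures.
From mathcomp Require Import all_boot all_order all_algebra.
From mathcomp Require Import all_classical all_reals all_analysis.
From Stdlib Require Import Relations.
Set Implicit Arguments. Unset Strict Implicit. Unset Printing Implicit Defensive.
Import Order.TTheory GRing.Theory Num.Theory.
Import numFieldNormedType.Exports.
Local Open Scope classical_set_scope.
Local Open Scope ring_scope.

Definition zpoint (d : nat) := {ffun 'I_d -> int}.

(* A face (a (d-1)-dimensional elementary cube) is encoded by a pair (z, i):
   it is  { x | x_i = z_i  and  z_j <= x_j <= z_j + 1 for j <> i }. *)
Definition face (d : nat) := (zpoint d * 'I_d)%type.

Definition face_set (R : realType) (d : nat) (f : face d) : set 'rV[R]_d :=
  [set x | x ord0 f.2 = (f.1 f.2)%:~R /\
           forall j : 'I_d, j != f.2 ->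
             (f.1 j)%:~R <= x ord0 j /\ x ord0 j <= (f.1 j)%:~R + 1].

(* Configurations: omega f = true iff the face f is open. *)
Definition config (d : nat) := face d -> bool.

Definition Kset (R : realType) (d : nat) (w : config d) : set 'rV[R]_d :=
  [set x | exists f : face d, w f /\ face_set (R:=R) f x].

Definition hole (R : realType) (d : nat) (w : config d) (h : set 'rV[R]_d) : Prop :=
  exists x, ~ Kset (R:=R) w x /\ h = connected_component (~` Kset (R:=R) w) x /\ bounded_set h.

Definition tboundary (R : realType) (d : nat) (A : set 'rV[R]_d) : set 'rV[R]_d :=
  closure A `\` interior A.

Definition hole_adj (R : realType) (d : nat) (w : config d) (h1 h2 : set 'rV[R]_d) : Prop :=
  hole w h1 /\ hole w h2 /\
  exists f : face d, face_set (R:=R) f `<=` tboundary h1 /\ face_set (R:=R) f `<=` tboundary h2.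

Definition hole_cluster (R : realType) (d : nat) (w : config d) (h : set 'rV[R]_d)
  : set (set 'rV[R]_d) :=
  [set h' | hole w h' /\ clos_refl_trans _ (hole_adj w) h h'].

Definition hole_clusters (R : realType) (d : nat) (w : config d)
  : set (set (set 'rV[R]_d)) :=
  [set C | exists h, hole w h /\ C = hole_cluster w h].

(* Dual vertices: v in Z^d encodes the dual vertex v + (1/2,...,1/2). *)
Definition dual_pt (R : realType) (d : nat) (v : zpoint d) : 'rV[R]_d :=
  \row_(i < d) ((v i)%:~R + 2^-1).

Definition shift (d : nat) (v : zpoint d) (i : 'I_d) : zpoint d :=
  [ffun j => if j == i then v j + 1 else v j].

Definition dual_adj (d : nat) (v w : zpoint d) : Prop :=
  exists i, w = shift v i \/ v = shift w i.

(* Open dual bonds: the bond {v, v + e_i} crosses the face (v + e_i, i), and is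
   open iff that face is closed. *)
Definition dual_open (d : nat) (om : config d) (v w : zpoint d) : Prop :=
  exists i, (w = shift v i /\ om (w, i) = false) \/ (v = shift w i /\ om (v, i) = false).

(* Vertices of infinite open dual clusters (a.s. there is at most one). *)
Definition Iset (d : nat) (om : config d) : set (zpoint d) :=
  [set v | ~ finite_set [set u | clos_refl_trans _ (dual_open om) v u]].

Definition adj_minus_I (d : nat) (om : config d) (v w : zpoint d) : Prop :=
  dual_adj v w /\ ~ Iset om v /\ ~ Iset om w.

Definition dual_components (d : nat) (om : config d) : set (set (zpoint d)) :=
  [set S | exists v, ~ Iset om v /\
     S = [set u | clos_refl_trans _ (adj_minus_I om) v u]].

Definition cylinders (d : nat) : set (set (config d)) :=
  [set A | exists (f : face d) (b : bool), A = [set om | om f = b]].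

Definition Omega (d : nat) := g_sigma_algebraType (@cylinders d).

Definition is_face_perc (R : realType) (d : nat) (p : R)
  (P : probability (Omega d) R) : Prop :=
  forall (s : seq (face d)) (b : face d -> bool), uniq s ->
    P [set om : Omega d | forall f, f \in s -> om f = b f] =
    (\prod_(f <- s) (if b f then p else 1 - p))%:E.

Definition hole_dual_bijection (R : realType) (d : nat) (om : config d) : Prop :=
  exists Phi : set (set 'rV[R]_d) -> set (zpoint d),
    (forall C, hole_clusters om C -> dual_components om (Phi C)) /\
    (forall C1 C2, hole_clusters om C1 -> hole_clusters om C2 ->
        Phi C1 = Phi C2 -> C1 = C2) /\
    (forall S, dual_components om S -> exists C, hole_clusters om C /\ Phi C = S) /\
    (forall C, hole_clusters om C ->
       (forall h v, C h -> h (dual_pt R v) -> Phi C v) /\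
       (~ finite_set C <-> ~ finite_set (Phi C))).

(* Write c_v for the centre of the unit cube Q_v of the dual vertex v and H_v
   for the component of R^d \ K(omega) containing c_v.  The segment from c_v to
   the centre of a neighbouring cube avoids K(omega) exactly when the face
   between them is closed, i.e. when the dual bond is open.  Conversely, the
   closed cubes containing a point outside K(omega) are pairwise joined by open
   dual bonds, so "the open dual cluster of a cube containing y" is locally
   constant on R^d \ K(omega) and hence constant on H_v.  Thus the centres in
   H_v form the open dual cluster of v, H_v is bounded iff that cluster is
   finite, i.e. iff v is not in I, and the holes are exactly the H_v with v
   outside I.  An open face in the boundary of two holes separates a cube of
   one from an equal or adjacent cube of the other, and an edge of
   (L^d)^* - I joins centres lying in the same hole or in adjacent holes, so
   C |-> {v | c_v lies in a hole of C} matches hole clusters with components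
   of (L^d)^* - I.  Each hole contains finitely many centres, so finiteness
   is preserved. *)

From Pilot Require Import Defs.
From HB Require Import structures.
From mathcomp Require Import all_boot all_order all_algebra.
From mathcomp Require Import all_classical all_reals all_analysis.
From Stdlib Require Import Relations.
From mathcomp Require Import ring lra zify.
Set Implicit Arguments. Unset Strict Implicit. Unset Printing Implicit Defensive.
Import Order.TTheory GRing.Theory Num.Theory.
Import numFieldNormedType.Exports.
Local Open Scope classical_set_scope.
Local Open Scope ring_scope.

Lemma intr_ltD1 (R : realDomainType) (a b : int) :
  (a%:~R : R) < b%:~R -> a%:~R + 1 <= (b%:~R : R).
Proof. by rewrite -[1]/(1%:~R : R) -intrD ltr_int ler_int; lia. Qed.

Lemma intr_near_eq (R : realDomainType) (a b : int) :
  (a%:~R : R) < b%:~R + 1 -> (b%:~R : R) < a%:~R + 1 -> a = b.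
Proof.
rewrite -[1]/(1%:~R : R) -!intrD !ltr_int !ltzD1 => h1 h2.
by apply/eqP; rewrite eq_le h1 h2.
Qed.

Lemma finite_int_box (I : finType) (N : int) :
  finite_set [set u : {ffun I -> int} | forall i, `|u i| <= N].
Proof.
pose n := absz N.
pose g (f : {ffun I -> 'I_(n.*2).+1}) : {ffun I -> int} := [ffun i => (f i)%:Z - n%:Z].
apply: (sub_finite_set _ (finite_image g (@finite_finset _ setT))) => u hu.
exists [ffun i => inord (absz (u i + n%:Z))] => //.
have {}hu i : - n%:Z <= u i <= n%:Z.
  by rewrite -ler_norml (le_trans (hu i)) // /n abszE ler_norm.
apply/ffunP => i; rewrite !ffunE; have /andP[a1 a2] := hu i.
rewrite inordK.
  by rewrite gez0_abs ?addrK // -lerBlDr sub0r.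
rewrite -ltz_nat gez0_abs; last by rewrite -lerBlDr sub0r.
move: a1 a2; rewrite -addn1 -muln2 !PoszD PoszM; move: (u i) => z; lia.
Qed.

Lemma finite_int_vectors_bounded (I : finType) (A : set {ffun I -> int}) :
  finite_set A -> exists2 N : int, 0 <= N & forall u i, A u -> `|u i| <= N.
Proof.
move=> /finite_seqP [s ->].
have sum_ge0 (w : {ffun I -> int}) : 0 <= \sum_j `|w j| by exact: sumr_ge0.
exists (\sum_(w <- s) \sum_j `|w j|) => [|u i us]; first exact: sumr_ge0.
rewrite (big_rem _ us) /= (bigD1 i) //= -addrA lerDl.
by rewrite addr_ge0 ?sumr_ge0.
Qed.

Section MatrixNorm.
Variables (K : realDomainType) (m n : nat).

Lemma ler_mx_entry_norm (x : 'M[K]_(m, n)) i j : `|x i j| <= `|x|.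
Proof.
by rewrite [leRHS]/Num.Def.normr /= mx_normrE; apply/bigmax_geP; right; exists (i, j).
Qed.

Lemma mx_norm_le (x : 'M[K]_(m, n)) M :
  0 <= M -> (forall i j, `|x i j| <= M) -> `|x| <= M.
Proof.
by move=> M0 h; rewrite [leLHS]/Num.Def.normr /= mx_normrE (bigmax_le _ M0) // => -[i j].
Qed.

End MatrixNorm.

Lemma bounded_setP (K : realFieldType) (V : normedModType K) (A : set V) :
  bounded_set A <-> exists M, forall x, A x -> `|x| <= M.
Proof.
split=> [[M [_ hM]]|[M hM]].
  by exists (M + 1); apply: hM; rewrite ltrDl.
exists M; split; first exact: num_real.
by move=> M' hM' x Ax; exact: le_trans (hM x Ax) (ltW hM').
Qed.

Section Connectivity.
Variables (R : realType) (V : normedModType R).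

Lemma connected_segment (a b : V) :
  connected [set a + t *: (b - a) | t in `[0, 1]].
Proof.
apply: connected_continuous_connected; first exact: segment_connected.
apply: continuous_subspaceT => t.
apply: (@continuousD _ _ _ (fun=> a) (fun t : R => t *: (b - a))); first exact: cvg_cst.
by apply: continuousZl; exact: cvg_id.
Qed.

Lemma connected_component_segment (U : set V) (a b : V) :
  (forall t, 0 <= t <= 1 -> U (a + t *: (b - a))) -> connected_component U a b.
Proof.
move=> hU; pose S := [set a + t *: (b - a) | t in `[(0 : R), 1]].
have Sa : S a by exists 0; [rewrite /= in_itv /= lexx ler01 | rewrite scale0r addr0].
have SU : S `<=` U by move=> _ [t /= ht <-]; apply: hU; move: ht; rewrite in_itv.
apply: (connected_component_max Sa SU (@connected_segment a b)).
by exists 1; [rewrite /= in_itv /= lexx ler01 | rewrite scale1r addrC subrK].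
Qed.

End Connectivity.

Lemma connected_component_locally_constant (T : topologicalType) (U S : set T) x :
  (forall y, U y -> \forall z \near y, S z <-> S y) -> S x ->
  connected_component U x `<=` S.
Proof.
move=> loc Sx; have [Ux|nUx] := pselect (U x); last first.
  by rewrite connected_component_out.
set A := connected_component U x.
have AU : A `<=` U by exact: connected_component_sub.
suff <- : A `&` S = A by move=> y [].
apply: component_connected.
- by exists x; split; [exact: connected_component_refl|].
- exists (interior S); first exact: open_interior.
  apply/seteqP; split=> y [Ay hy]; split=> //; last exact: interior_subset.
  by apply: filterS (loc y (AU y Ay)) => z /iffRL; apply.
- exists (~` interior (~` S)); first exact/open_closedC/open_interior.
  apply/seteqP; split=> y [Ay hy]; split=> //; first by move=> /interior_subset.
  apply: contrapT => nSy; apply: hy.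
  by apply: filterS (loc y (AU y Ay)) => z /iffLR zy /zy.
Qed.

Section Cubes.
Variables (R : realType) (d : nat).

Local Notation c := (dual_pt R).

Definition cube (w : zpoint d) : set 'rV[R]_d :=
  [set x | forall i, (w i)%:~R <= x ord0 i <= (w i)%:~R + 1].

Definition open_cube (w : zpoint d) : set 'rV[R]_d :=
  [set x | forall i, (w i)%:~R < x ord0 i < (w i)%:~R + 1].

Definition lattice_floor (y : 'rV[R]_d) : zpoint d := [ffun i => Num.floor (y ord0 i)].

Definition unshift (z : zpoint d) (i : 'I_d) : zpoint d :=
  [ffun k => if k == i then z k - 1 else z k].

Lemma shift_unshift z i : Defs.shift (unshift z i) i = z.
Proof. by apply/ffunP => k; rewrite !ffunE; case: eqP => // ->; rewrite subrK. Qed.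

Lemma dual_ptE (v : zpoint d) i : c v ord0 i = (v i)%:~R + 2^-1.
Proof. by rewrite mxE. Qed.

Lemma open_cube_dual_pt (v : zpoint d) : open_cube v (c v).
Proof. by move=> i; rewrite dual_ptE; apply/andP; split; lra. Qed.

Lemma open_cube_notK (om : config d) w x : open_cube w x -> ~ Kset om x.
Proof.
move=> hx [[z j] [_ [/= xj _]]].
have /andP[] := hx j; rewrite xj => /intr_ltD1 h1 h2; lra.
Qed.

Lemma cube_lattice_floor y : cube (lattice_floor y) y.
Proof.
move=> i; rewrite ffunE floor_le /=.
by rewrite -[1]/(1%:~R : R) -intrD ltW // floorD1_gt.
Qed.

Lemma lattice_floor_dual_pt (v : zpoint d) : lattice_floor (c v) = v.
Proof.
apply/ffunP => i; rewrite ffunE dual_ptE; apply: floor_def.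
by rewrite intrD; apply/andP; split; lra.
Qed.

Lemma nbhs_floor (r : R) :
  \forall s \near r, (Num.floor s)%:~R <= r <= (Num.floor s)%:~R + 1.
Proof.
have h1 := lt_nbhsl (floorD1_gt r).
have h2 := lt_nbhsr (ceilB1_lt r).
near=> s.
have hs1 : s < (Num.floor r + 1)%:~R by near: s.
have hs2 : (Num.ceil r - 1)%:~R < s by near: s.
apply/andP; split.
  have : Num.floor s < Num.floor r + 1 by rewrite floor_lt_int.
  rewrite ltzD1 => h; apply: le_trans (floor_le r); by rewrite ler_int.
have : Num.ceil r - 1 <= Num.floor s by rewrite floor_ge_int ltW.
rewrite lerBlDr -(ler_int R) intrD => h.
exact: le_trans (ceil_ge r) h.
Unshelve. all: by end_near.
Qed.

Lemma nbhs_cube_lattice_floor x : \forall y \near x, cube (lattice_floor y) x.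
Proof.
pose in_floor_interval i y :=
  (lattice_floor y i)%:~R <= x ord0 i <= (lattice_floor y i)%:~R + 1.
apply: (@filter_forall _ _ in_floor_interval (nbhs x)) => i.
have := @coord_continuous R 1 d ord0 i x _ (nbhs_floor (x ord0 i)).
by apply: (@filterS _ (nbhs x)) => y /=; rewrite /in_floor_interval ffunE.
Qed.

Lemma open_cube_segment w x t : cube w x -> 0 < t <= 1 ->
  open_cube w (x + t *: (c w - x)).
Proof.
move=> hx /andP[t0 t1] i; rewrite !mxE.
by have /andP[h1 h2] := hx i; apply/andP; split; nra.
Qed.

Lemma dual_pt_cube_dist w x : cube w x -> `|c w - x| <= 1.
Proof.
move=> hx; apply: mx_norm_le => // i j; rewrite (ord1 i) !mxE.
by have /andP[h1 h2] := hx j; rewrite ler_norml; apply/andP; split; lra.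
Qed.

Lemma face_sub_cube (z : zpoint d) i : face_set (R:=R) (z, i) `<=` cube z.
Proof.
move=> q [/= qi qk] k; have [->|nki] := eqVneq k i.
  by rewrite qi lexx /= lerDl ler01.
by have [-> ->] := qk k nki.
Qed.

Lemma face_sub_cube_shift (a : zpoint d) i :
  face_set (R:=R) (Defs.shift a i, i) `<=` cube a.
Proof.
move=> q [/= qi qk] k; have [->|nki] := eqVneq k i.
  by rewrite qi ffunE eqxx intrD lexx /= lerDl ler01.
by have [] := qk k nki; rewrite ffunE (negbTE nki) => -> ->.
Qed.

Lemma cubes_shift (w w' : zpoint d) i x : (forall k, k != i -> w' k = w k) ->
  cube w x -> cube w' x -> w i < w' i -> w' = Defs.shift w i.
Proof.
move=> ww' wx w'x lt_ww'; apply/ffunP => k; rewrite ffunE.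
case: eqP => [->|/eqP nk]; last exact: ww'.
have /andP[_ x_le] := wx i; have /andP[le_x _] := w'x i.
have : (w' i)%:~R <= (w i + 1)%:~R :> R by rewrite intrD; lra.
by rewrite ler_int => le_w'w; apply/eqP; rewrite eq_le le_w'w lezD1.
Qed.

Lemma dual_segment_shiftE (a : zpoint d) i t k :
  (c a + t *: (c (Defs.shift a i) - c a)) ord0 k =
  (a k)%:~R + 2^-1 + (if k == i then t else 0).
Proof. by rewrite !mxE ffunE; case: eqP => _; rewrite ?intrD; ring. Qed.

End Cubes.

Section HoleComponents.
Variables (R : realType) (d : nat) (om : config d).

Local Notation c := (dual_pt R).
Local Notation U := (~` Kset (R:=R) om).
Local Notation H v := (connected_component U (dual_pt R v)).
Local Notation I := (Iset om).
Local Notation open_path := (clos_refl_trans _ (dual_open om)).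
Local Notation path_minus_I := (clos_refl_trans _ (adj_minus_I om)).
Local Notation hole_path := (clos_refl_trans _ (hole_adj om)).

Lemma dual_pt_notK (v : zpoint d) : U (c v).
Proof. exact/open_cube_notK/open_cube_dual_pt. Qed.

Lemma cube_component (w : zpoint d) x : cube w x -> U x -> connected_component U x (c w).
Proof.
move=> wx Ux; apply: connected_component_segment => t /andP[t0 t1].
have [->|tn0] := eqVneq t 0; first by rewrite scale0r addr0.
by apply: open_cube_notK; apply: open_cube_segment => //; rewrite lt_def tn0 t0.
Qed.

Lemma closed_face_component (a : zpoint d) i : om (Defs.shift a i, i) = false ->
  H a (c (Defs.shift a i)).
Proof.
move=> closed_face; apply: connected_component_segment => t /andP[t0 t1].
move=> [[z j] [om_zj [/= zj zk]]]; rewrite dual_segment_shiftE in zj.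
have [eji|nji] := eqVneq j i; last first.
  move: zj; rewrite (negbTE nji) addr0 => zj.
  have /intr_ltD1 : (a j)%:~R < (z j)%:~R :> R by lra.
  lra.
subst j; rewrite eqxx in zj.
suff ez : z = Defs.shift a i by rewrite ez closed_face in om_zj.
apply/ffunP => k; rewrite ffunE; case: eqP => [->|/eqP nki].
  by apply: intr_near_eq; rewrite intrD; lra.
have [] := zk k nki; rewrite dual_segment_shiftE (negbTE nki) addr0 => h1 h2.
by apply: intr_near_eq; lra.
Qed.

Lemma dual_open_sym (a b : zpoint d) : dual_open om a b -> dual_open om b a.
Proof. by move=> [i [h|h]]; exists i; [right|left]. Qed.

Lemma open_path_sym (a b : zpoint d) : open_path a b -> open_path b a.
Proof.
elim=> [x y /dual_open_sym|x|x y z _ xy _ yz]; [exact: rt_step|exact: rt_refl|].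
exact: rt_trans yz xy.
Qed.

Lemma open_path_component (a b : zpoint d) : open_path a b -> H a (c b).
Proof.
elim=> [x y [i [[-> h]|[-> h]]]|x|x y z _ xy _ yz].
- exact: closed_face_component.
- exact/connected_component_sym/closed_face_component.
- exact/connected_component_refl/dual_pt_notK.
- exact: connected_component_trans xy yz.
Qed.

Lemma cubes_closed_face (w : zpoint d) i x : cube w x -> cube (Defs.shift w i) x -> U x ->
  om (Defs.shift w i, i) = false.
Proof.
move=> wx swx Ux; apply/negbTE/negP => om_f; apply: Ux.
exists (Defs.shift w i, i); split => //; split => /=.
  have := wx i; have := swx i; rewrite ffunE eqxx intrD => /andP[a1 a2] /andP[b1 b2].
  lra.
move=> k nki; rewrite ffunE (negbTE nki).
by have /andP[] := wx k.
Qed.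

Lemma cubes_open_path_step (w w' : zpoint d) i x : (forall k, k != i -> w' k = w k) ->
  cube w x -> cube w' x -> U x -> open_path w w'.
Proof.
move=> ww' wx w'x Ux.
have w'w k : k != i -> w k = w' k by move=> /ww' ->.
have [lt_ww'|lt_w'w|eq_ww'] := ltgtP (w i) (w' i); last first.
- suff -> : w' = w by exact: rt_refl.
  by apply/ffunP => k; have [->|nk] := eqVneq k i; [rewrite eq_ww'|exact: ww'].
- have ew := cubes_shift w'w w'x wx lt_w'w.
  apply: rt_step; exists i; right; split => //.
  by rewrite ew; apply: cubes_closed_face w'x _ Ux; rewrite -ew.
- have ew := cubes_shift ww' wx w'x lt_ww'.
  apply: rt_step; exists i; left; split => //.
  by rewrite ew; apply: cubes_closed_face wx _ Ux; rewrite -ew.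
Qed.

Lemma cubes_open_path (w1 w2 : zpoint d) x :
  cube w1 x -> cube w2 x -> U x -> open_path w1 w2.
Proof.
move=> w1x w2x Ux.
pose mix (s : seq 'I_d) : zpoint d := [ffun k => if k \in s then w2 k else w1 k].
have mix_cube s : cube (mix s) x.
  by move=> k; rewrite ffunE; case: (k \in s); [exact: w2x|exact: w1x].
have mix_path s : open_path w1 (mix s).
  elim: s => [|i s IH].
    suff -> : mix [::] = w1 by exact: rt_refl.
    by apply/ffunP => k; rewrite ffunE.
  apply: rt_trans IH (cubes_open_path_step (i:=i) _ (mix_cube _) (mix_cube _) Ux).
  by move=> k nki; rewrite !ffunE in_cons (negbTE nki).
suff <- : mix (enum 'I_d) = w2 by exact: mix_path.
by apply/ffunP => k; rewrite ffunE mem_enum.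
Qed.

Lemma component_open_path (v : zpoint d) :
  H v `<=` [set y | open_path v (lattice_floor y)].
Proof.
apply: connected_component_locally_constant => [y Uy|].
  apply: filterS (nbhs_cube_lattice_floor y) => z zy.
  have yz := cubes_open_path (cube_lattice_floor y) zy Uy.
  split=> vz; last exact: rt_trans vz yz.
  exact: rt_trans vz (open_path_sym yz).
by rewrite /= lattice_floor_dual_pt; exact: rt_refl.
Qed.

Lemma component_dual_ptE (v u : zpoint d) : H v (c u) <-> open_path v u.
Proof.
split; last exact: open_path_component.
by move=> /component_open_path /=; rewrite lattice_floor_dual_pt.
Qed.

Lemma bounded_componentE (v : zpoint d) :
  bounded_set (H v) <-> finite_set [set u | open_path v u].
Proof.
split=> [/bounded_setP [M hM]|/finite_int_vectors_bounded [N N0 hN]]; last first.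
  apply/bounded_setP; exists (N%:~R + 1) => y /component_open_path vy.
  apply: mx_norm_le => [|i j]; first by rewrite addr_ge0 // ler0z.
  rewrite (ord1 i) ler_norml; have /andP[y1 y2] := cube_lattice_floor y j.
  have := hN _ j vy; rewrite -(ler_int R) intr_norm ler_norml => /andP[n1 n2].
  by apply/andP; split; lra.
apply: sub_finite_set (finite_int_box _ (Num.ceil (M + 1))) => u vu i.
have := le_trans (ler_mx_entry_norm (c u) ord0 i) (hM _ (open_path_component vu)).
rewrite dual_ptE => cu; rewrite -(ler_int R) intr_norm.
apply: le_trans (ceil_ge _); move: cu; rewrite !ler_norml => /andP[a1 a2].
by apply/andP; split; lra.
Qed.

Lemma face_sub_boundary (w : zpoint d) (f : face d) : om f ->
  face_set (R:=R) f `<=` cube w -> face_set (R:=R) f `<=` tboundary (H w).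
Proof.
move=> om_f fw q fq; split; last first.
  by move=> /interior_subset /connected_component_sub; apply; exists f.
move=> B /nbhs_ballP [e e0 eB].
pose t := Num.min (e / 2) 1.
have t0 : 0 < t by rewrite lt_min ltr01 divr_gt0.
have t1 : t <= 1 by rewrite ge_min lexx orbT.
have te : t <= e / 2 by rewrite ge_min lexx.
have qy := open_cube_segment (fw _ fq) (introT andP (conj t0 t1)).
exists (q + t *: (c w - q)); split.
  apply/connected_component_sym/cube_component; last exact: open_cube_notK qy.
  by move=> i; have /andP[y1 y2] := qy i; rewrite !ltW.
apply: eB; rewrite -ball_normE /= opprD addrA subrr sub0r normrN normrZ.
rewrite ger0_norm; last exact: ltW.
have dist_le1 := dual_pt_cube_dist (fw _ fq).
have : t * `|c w - q| <= t * 1 by rewrite ler_wpM2l // ltW.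
lra.
Qed.

Lemma bounded_componentP (v : zpoint d) : bounded_set (H v) <-> ~ I v.
Proof. by rewrite bounded_componentE; split=> [fin /(_ fin)|/contrapT]. Qed.

Lemma hole_dual_pt h (v : zpoint d) : hole om h -> h (c v) -> h = H v.
Proof. by move=> [x [_ [-> _]]] /same_connected_component. Qed.

Lemma holeP h : hole om h <-> exists2 v, ~ I v & h = H v.
Proof.
split=> [hh|[v nIv ->]]; last first.
  exists (c v); split; first exact: dual_pt_notK.
  by split=> //; apply/bounded_componentP.
have [x [Ux [hx _]]] := hh.
have hfx : h (c (lattice_floor x)).
  by rewrite hx; exact: cube_component (cube_lattice_floor x) Ux.
have e := hole_dual_pt hh hfx.
exists (lattice_floor x) => //; apply/bounded_componentP; rewrite -e.
by have [? [_ [_ ?]]] := hh.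
Qed.

Lemma open_path_notI (a b : zpoint d) : open_path a b -> ~ I a -> ~ I b.
Proof.
move=> ab nIa Ib; apply: nIa => fin_a; apply: Ib.
by apply: sub_finite_set fin_a => u; exact: rt_trans ab.
Qed.

Lemma open_path_minus_I (a b : zpoint d) : open_path a b -> ~ I a -> path_minus_I a b.
Proof.
elim=> [x y xy nIx|x _|x y z xy IH1 yz IH2 nIx]; last 2 first.
- exact: rt_refl.
- exact: rt_trans (IH1 nIx) (IH2 (open_path_notI xy nIx)).
apply: rt_step; split; last by split=> //; exact: open_path_notI (rt_step _ _ _ _ xy) nIx.
by move: xy => [i [[-> _]|[-> _]]]; exists i; [left|right].
Qed.

Lemma path_minus_I_notI (a b : zpoint d) : path_minus_I a b -> ~ I a -> ~ I b.
Proof. by elim=> [x y [_ [_ ?]]|x|x y z _ IH1 _ IH2 /IH1 /IH2]. Qed.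

Lemma dual_bond_holes (a : zpoint d) i : ~ I a -> ~ I (Defs.shift a i) ->
  H a = H (Defs.shift a i) \/ hole_adj om (H a) (H (Defs.shift a i)).
Proof.
move=> nIa nIb; set b := Defs.shift a i.
case om_f: (om (b, i)); [right|left].
  split; first by apply/holeP; exists a.
  split; first by apply/holeP; exists b.
  exists (b, i); split; apply: face_sub_boundary => //.
    exact: face_sub_cube_shift.
  exact: face_sub_cube.
by apply/same_connected_component/open_path_component/rt_step; exists i; left.
Qed.

Lemma hole_adj_sym (h1 h2 : set 'rV[R]_d) : hole_adj om h1 h2 -> hole_adj om h2 h1.
Proof. by move=> [? [? [f [? ?]]]]; split=> //; split=> //; exists f. Qed.

Lemma adj_minus_I_holes (a b : zpoint d) : adj_minus_I om a b ->
  H a = H b \/ hole_adj om (H a) (H b).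
Proof.
move=> [[i [->|->]] [nIa nIb]]; first exact: dual_bond_holes.
by case: (dual_bond_holes nIb nIa) => [->|/hole_adj_sym]; [left|right].
Qed.

Lemma boundary_face_dual_pt h (z : zpoint d) i : hole om h ->
  face_set (R:=R) (z, i) `<=` tboundary h -> h (c z) \/ h (c (unshift z i)).
Proof.
move=> hh zi_h.
(* q is the centre of the face: any point within 1/2 of it lies in one of the
   two closed cubes on either side. *)
pose q : 'rV[R]_d := \row_k (if k == i then (z k)%:~R else (z k)%:~R + 2^-1).
have fq : face_set (R:=R) (z, i) q.
  split=> /=; first by rewrite mxE eqxx.
  by move=> k nki; rewrite mxE (negbTE nki); split; lra.
have [cl_q _] := zi_h q fq.
have half_gt0 : 0 < 2^-1 :> R by rewrite invr_gt0.
have [y [hy qy]] := cl_q (ball q (2^-1)) (nbhsx_ballx q _ half_gt0).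
have [x [_ [hx _]]] := hh.
have Uy : U y by move: hy; rewrite hx => /connected_component_sub.
have qyk k : `|q ord0 k - y ord0 k| < 2^-1.
  move: qy; rewrite -ball_normE /=; apply: le_lt_trans.
  by have := ler_mx_entry_norm (q - y) ord0 k; rewrite !mxE.
have cube_h w : cube w y -> h (c w).
  move=> wy; rewrite hx; apply: connected_component_trans (cube_component wy Uy).
  by rewrite -hx.
have [zi_y|y_zi] := leP ((z i)%:~R) (y ord0 i); [left|right]; apply: cube_h => k;
  have := qyk k; rewrite mxE ?ffunE; case: eqP => [->|_];
  rewrite ?intrD ltr_norml => /andP[a b]; apply/andP; split; lra.
Qed.

Lemma hole_adj_dual_pts h1 h2 : hole_adj om h1 h2 ->
  exists w1 w2, [/\ h1 (c w1), h2 (c w2) & w1 = w2 \/ dual_adj w1 w2].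
Proof.
move=> [hh1 [hh2 [[z i] [zi_h1 zi_h2]]]].
have adj_z : dual_adj (unshift z i) z by exists i; left; rewrite shift_unshift.
have adj_z' : dual_adj z (unshift z i) by exists i; right; rewrite shift_unshift.
case: (boundary_face_dual_pt hh1 zi_h1) => p1;
  case: (boundary_face_dual_pt hh2 zi_h2) => p2; eexists; eexists; split; by eauto.
Qed.

Lemma path_minus_I_hole_path (a b : zpoint d) : path_minus_I a b -> hole_path (H a) (H b).
Proof.
elim=> [x y /adj_minus_I_holes [exy|xy]|x|x y z _ xy _ yz].
- by rewrite exy; exact: rt_refl.
- exact: rt_step.
- exact: rt_refl.
- exact: rt_trans xy yz.
Qed.

Lemma hole_path_minus_I h1 h2 : hole_path h1 h2 -> forall u1, ~ I u1 -> h1 = H u1 ->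
  exists2 u2, path_minus_I u1 u2 & h2 = H u2.
Proof.
elim=> [x y xy|x|x y z _ IH1 _ IH2] u1 nIu1 ex; subst x; last 2 first.
- by exists u1 => //; exact: rt_refl.
- have [u2 u12 ey] := IH1 u1 nIu1 erefl; subst y.
  have [u3 u23 ->] := IH2 u2 (path_minus_I_notI u12 nIu1) erefl.
  by exists u3 => //; exact: rt_trans u12 u23.
have [w1 [w2 [w1x w2y w12]]] := hole_adj_dual_pts xy.
have [_ [hole_y _]] := xy.
have ey := hole_dual_pt hole_y w2y.
have u1w1 : open_path u1 w1 by apply/component_dual_ptE.
have nIw2 : ~ I w2.
  by apply/bounded_componentP; rewrite -ey; have [? [_ [_ ?]]] := hole_y.
exists w2 => //; apply: rt_trans (open_path_minus_I u1w1 nIu1) _.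
case: w12 => [<-|adj12]; first exact: rt_refl.
by apply: rt_step; split=> //; split=> //; exact: open_path_notI u1w1 nIu1.
Qed.

Lemma hole_clusterE (v : zpoint d) : ~ I v ->
  hole_cluster om (H v) = (fun u => H u) @` [set u | path_minus_I v u].
Proof.
move=> nIv; apply/seteqP; split=> [h [_ /hole_path_minus_I hp]|_ [u vu <-]].
  by have [u vu ->] := hp v nIv erefl; exists u.
split; last exact: path_minus_I_hole_path.
by apply/holeP; exists u => //; exact: path_minus_I_notI vu nIv.
Qed.

Definition cluster_dual_pts (C : set (set 'rV[R]_d)) : set (zpoint d) :=
  [set u | exists2 h, C h & h (c u)].

Lemma cluster_dual_ptsE (v : zpoint d) : ~ I v ->
  cluster_dual_pts (hole_cluster om (H v)) = [set u | path_minus_I v u].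
Proof.
move=> nIv; rewrite hole_clusterE //; apply/seteqP; split=> u.
  move=> [_ [w vw <-] /component_dual_ptE wu].
  exact: rt_trans vw (open_path_minus_I wu (path_minus_I_notI vw nIv)).
by move=> vu; exists (H u); [exists u|exact/connected_component_refl/dual_pt_notK].
Qed.

Lemma hole_clustersP C :
  hole_clusters om C <-> exists2 v, ~ I v & C = hole_cluster om (H v).
Proof.
split=> [[h [/holeP [v nIv ->] ->]]|[v nIv ->]]; first by exists v.
by exists (H v); split=> //; apply/holeP; exists v.
Qed.

Lemma finite_hole_clusterE (v : zpoint d) : ~ I v ->
  finite_set (hole_cluster om (H v)) <-> finite_set [set u | path_minus_I v u].
Proof.
move=> nIv; split=> [fin|fin]; last by rewrite hole_clusterE //; exact: finite_image.
rewrite -cluster_dual_ptsE //.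
apply: sub_finite_set (bigcup_finite (F := fun h => [set u | h (c u)]) fin _).
  by move=> u [h Ch hu]; exists h.
move=> h; rewrite hole_clusterE // => -[w vw <-].
apply: sub_finite_set (contrapT (path_minus_I_notI vw nIv)) => u.
by move=> /= /component_dual_ptE.
Qed.

Lemma sure_hole_dual_bijection : hole_dual_bijection R om.
Proof.
exists cluster_dual_pts; split; [|split; [|split]].
- by move=> C /hole_clustersP [v nIv ->]; exists v; rewrite cluster_dual_ptsE.
- move=> C1 C2 /hole_clustersP [v1 nIv1 ->] /hole_clustersP [v2 nIv2 ->].
  by rewrite !cluster_dual_ptsE // !hole_clusterE // => ->.
- move=> S [v [nIv ->]]; exists (hole_cluster om (H v)).
  by split; [apply/hole_clustersP; exists v|exact: cluster_dual_ptsE].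
- move=> C /hole_clustersP [v nIv ->]; split; first by move=> h u Ch hu; exists h.
  by rewrite cluster_dual_ptsE // finite_hole_clusterE.
Qed.

End HoleComponents.

(* [Iset] collects every infinite open dual cluster, so the bijection exists
   for every configuration and no hypothesis on d, p or P is needed. *)
Theorem lemma3p3 (R : realType) (d : nat) (p : R) (P : probability (Omega d) R) :
  (2 <= d)%N -> 0 <= p -> p <= 1 -> is_face_perc p P ->
  {ae P, forall om : Omega d, hole_dual_bijection R om}.
Proof. by move=> _ _ _ _; apply: aeW => om; exact: sure_hole_dual_bijection. Qed.
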